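(* Let $K : \mathbb{B}^n \times \mathbb{B}^r \to \mathbb{B}$ and let $f_1, \ldots, f_r : \mathbb{B}^n \to \mathbb{B}$ be such that for all $i \in \{1,\dots,r\}$ and all $\mathbf{x}\in\mathbb B^n$, $$f_i(\mathbf{x}) = \exists u_{i+1},\ldots,u_r\; K(\mathbf{x}, f_1(\mathbf{x}), \ldots, f_{i-1}(\mathbf{x}), 1, u_{i+1}, \ldots, u_r).$$ Then for every $\mathbf{x} \in \mathrm{Dom}(K)$ we have $K(\mathbf{x}, f_1(\mathbf{x}), \ldots, f_r(\mathbf{x})) = 1$.
   Context: $\mathbb{B}=\{0,1\}$. For a boolean function $g$, $\exists y\, g$ denotes $g|_{y=0}+g|_{y=1}$ (logical OR of the two restrictions), extended to several variables by iteration. $\mathrm{Dom}(K) = \{\mathbf x \in \mathbb B^n \mid \exists \mathbf u\in\mathbb B^r\; K(\mathbf x,\mathbf u)=1\}$. *)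

From mathcomp Require Import all_boot.
Set Implicit Arguments. Unset Strict Implicit. Unset Printing Implicit Defensive.

(* Boolean vectors in B^n are finite functions 'I_n -> bool (0-indexed). *)
Notation bvec n := {ffun 'I_n -> bool}.

Definition Dom (n r : nat) (K : bvec n -> bvec r -> bool) (x : bvec n) : bool :=
  [exists u : bvec r, K x u].

(* The assignment (f_1(x),...,f_{i-1}(x), 1, u_{i+1},...,u_r) with 0-based i:
   coordinates j < i get f j x, coordinate i gets 1, j > i get u j. *)
Definition prefix_assign (n r : nat) (f : 'I_r -> bvec n -> bool) (x : bvec n)
  (i : 'I_r) (u : bvec r) : bvec r :=
  [ffun j : 'I_r => if (j < i)%N then f j x else if j == i then true else u j].

From mathcomp Require Import all_boot.

Set Implicit Arguments.
Unset Strict Implicit.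
Unset Printing Implicit Defensive.

(* Fix x in Dom(K) and extend a witness coordinate by coordinate.  If some
   witness u of K x agrees with f x below i, then either u i = 1, so u is
   itself the assignment (f_<i x, 1, u_>i) and hence f i x = 1 = u i; or
   f i x = 1, and the assignment witnessing f i x is a new witness agreeing
   with f x up to i; or u i = 0 = f i x.  After r steps the witness is f x. *)

Section PrefixAssign.

Variables (n r : nat) (f : 'I_r -> bvec n -> bool) (x : bvec n).

Definition agrees_below (k : nat) (u : bvec r) : Prop :=
  forall j : 'I_r, (j < k)%N -> u j = f j x.

Lemma prefix_assign_lt (i j : 'I_r) (u : bvec r) :
  (j < i)%N -> prefix_assign f x i u j = f j x.
Proof. by rewrite ffunE => ->. Qed.

Lemma prefix_assign_id (i : 'I_r) (u : bvec r) :
  agrees_below i u -> u i -> prefix_assign f x i u = u.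
Proof.
move=> agr ui; apply/ffunP => j; rewrite ffunE.
case: ltnP => [/agr -> //|_]; by case: eqP => [->|].
Qed.

Lemma agrees_belowS (i : 'I_r) (u : bvec r) :
  agrees_below i u -> u i = f i x -> agrees_below i.+1 u.
Proof.
move=> agr ui j; rewrite ltnS leq_eqVlt => /orP[/eqP/val_inj -> //|]; exact: agr.
Qed.

End PrefixAssign.

Section Extension.

Variables (n r : nat) (K : bvec n -> bvec r -> bool)
  (f : 'I_r -> bvec n -> bool) (x : bvec n).

Hypothesis f_fix : forall i : 'I_r,
  f i x = [exists u : bvec r, K x (prefix_assign f x i u)].

Lemma prefix_assign_agrees (i : 'I_r) (v : bvec r) :
  K x (prefix_assign f x i v) -> agrees_below f x i.+1 (prefix_assign f x i v).
Proof.
move=> Kv; apply: agrees_belowS => [j|]; first exact: prefix_assign_lt.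
rewrite ffunE ltnn eqxx f_fix; apply/esym/existsP; by exists v.
Qed.

Lemma witness_extend (i : 'I_r) (u : bvec r) :
  K x u -> agrees_below f x i u ->
  exists2 w : bvec r, K x w & agrees_below f x i.+1 w.
Proof.
move=> Ku agr; case ui: (u i).
  exists u => //; rewrite -(prefix_assign_id agr ui) in Ku *.
  exact: prefix_assign_agrees.
case fi: (f i x).
  move: fi; rewrite f_fix => /existsP[v Kv].
  by exists (prefix_assign f x i v); last exact: prefix_assign_agrees.
by exists u; last by apply: agrees_belowS => //; rewrite ui fi.
Qed.

Lemma witness_agrees_below (k : nat) :
  Dom K x -> (k <= r)%N -> exists2 u : bvec r, K x u & agrees_below f x k u.
Proof.
move=> /existsP[u0 Ku0]; elim: k => [|k IH] k_le_r; first by exists u0.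
have [u Ku agr] := IH (ltnW k_le_r).
exact: (witness_extend (i := Ordinal k_le_r) Ku agr).
Qed.

End Extension.

Theorem lemma1 (n r : nat) (K : bvec n -> bvec r -> bool)
  (f : 'I_r -> bvec n -> bool) :
  (forall (i : 'I_r) (x : bvec n),
      f i x = [exists u : bvec r, K x (prefix_assign f x i u)]) ->
  forall x : bvec n, Dom K x -> K x [ffun j => f j x].
Proof.
move=> f_fix x domx.
have [u Ku agr] := witness_agrees_below (f_fix ^~ x) domx (leqnn r).
suff -> : [ffun j => f j x] = u by [].
by apply/ffunP => j; rewrite ffunE agr.
Qed.
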